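(* Consider the weighted stochastic block model: there are $r$ latent communities labelled $1,\ldots,r$; each node $i$ is independently assigned a latent community $Z_i$ with $\mathbb{P}(Z_i=z)=p_z>0$ for $z=1,\ldots,r$ (so $\boldsymbol{p}=(p_1,\ldots,p_r)'$ sums to one); each unordered pair of distinct nodes $i\neq j$ carries a real-valued edge weight $X_{i,j}=X_{j,i}$, where, conditional on the community indicators, the edge weights are independent and $X_{i,j}$ has distribution function $F_{z_1,z_2}(x)=\mathbb{P}(X_{i,j}\le x\mid Z_i=z_1,Z_j=z_2)$. Let $F_z(x):=\mathbb{P}(X_{i,j}\le x\mid Z_i=z)=\sum_{z'=1}^r F_{z,z'}(x)\,p_{z'}$. Suppose that the functions $F_1,\ldots,F_r$ are linearly independent. Then: (i) The number of communities $r$ is nonparametrically recoverable (uniquely determined) from the joint distribution of the edge weights $(X_{1,2},X_{1,3})$ of a two-star subgraph on three distinct nodes $1,2,3$ (edges $\{1,2\},\{1,3\}$). (ii) The community distribution $\boldsymbol{p}$, as well as, for a given function $\varphi$, the conditional expectations $$\varphi_{z_1,z_2}:=\mathbb{E}(\varphi(X_{i,j})\mid Z_i=z_1,Z_j=z_2),\qquad 1\le z_1,z_2\le r,$$ are nonparametrically recoverable (uniquely determined up to a common relabeling of the latent communities) from the joint distribution of the edge weights $(X_{1,2},X_{1,3},X_{1,4})$ of a three-star subgraph on four distinct nodes and the joint distribution of the edge weights $(X_{1,2},X_{1,3},X_{3,4})$ of a path subgraph on four distinct nodes $1,2,3,4$.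
   Context: ''Nonparametrically recoverable'' means that the quantity is uniquely determined by the indicated distribution of observed edge weights, without any parametric restrictions on the distributions $F_{z_1,z_2}$, among all weighted stochastic block models satisfying the stated assumptions; ''up to relabeling'' means up to a single permutation of the community labels $1,\ldots,r$ applied simultaneously to all components. *)

From HB Require Import structures.
From mathcomp Require Import all_boot all_order all_algebra.
From mathcomp Require Import all_classical all_reals all_analysis.
Set Implicit Arguments. Unset Strict Implicit. Unset Printing Implicit Defensive.
Import Order.TTheory GRing.Theory Num.Theory.
Local Open Scope classical_set_scope.
Local Open Scope ring_scope.

(* Parameters of a weighted stochastic block model with r communities:
   p : community probabilities, F z1 z2 : law (a probability on R) of an edge
   weight X_{i,j} given Z_i = z1, Z_j = z2. *)

Definition edge_cdf (R : realType) (r : nat)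
  (F : 'I_r -> 'I_r -> probability R R) (z1 z2 : 'I_r) (x : R) : R :=
  fine (F z1 z2 `]-oo, x]%classic).

Definition wsbm (R : realType) (r : nat) (p : 'I_r -> R)
  (F : 'I_r -> 'I_r -> probability R R) : Prop :=
  (forall z, 0 < p z) /\ (\sum_(z < r) p z = 1) /\
  (* X_{i,j} = X_{j,i} forces F_{z1,z2} = F_{z2,z1} *)
  (forall z1 z2, F z1 z2 = F z2 z1).

Definition node_cdf (R : realType) (r : nat) (p : 'I_r -> R)
  (F : 'I_r -> 'I_r -> probability R R) (z : 'I_r) (x : R) : R :=
  \sum_(z' < r) edge_cdf F z z' x * p z'.

Definition Fz_lin_indep (R : realType) (r : nat) (p : 'I_r -> R)
  (F : 'I_r -> 'I_r -> probability R R) : Prop :=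
  forall c : 'I_r -> R,
    (forall x : R, \sum_(z < r) c z * node_cdf p F z x = 0) ->
    forall z, c z = 0.

(* Joint distribution function of (X_{1,2}, X_{1,3}) (two-star). *)
Definition twostar_cdf (R : realType) (r : nat) (p : 'I_r -> R)
  (F : 'I_r -> 'I_r -> probability R R) (x2 x3 : R) : R :=
  \sum_(z1 < r) \sum_(z2 < r) \sum_(z3 < r)
     p z1 * p z2 * p z3 * (edge_cdf F z1 z2 x2 * edge_cdf F z1 z3 x3).

(* Joint distribution function of (X_{1,2}, X_{1,3}, X_{1,4}) (three-star). *)
Definition threestar_cdf (R : realType) (r : nat) (p : 'I_r -> R)
  (F : 'I_r -> 'I_r -> probability R R) (x2 x3 x4 : R) : R :=
  \sum_(z1 < r) \sum_(z2 < r) \sum_(z3 < r) \sum_(z4 < r)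
     p z1 * p z2 * p z3 * p z4 *
     (edge_cdf F z1 z2 x2 * edge_cdf F z1 z3 x3 * edge_cdf F z1 z4 x4).

(* Joint distribution function of (X_{1,2}, X_{1,3}, X_{3,4}) (path). *)
Definition path_cdf (R : realType) (r : nat) (p : 'I_r -> R)
  (F : 'I_r -> 'I_r -> probability R R) (x12 x13 x34 : R) : R :=
  \sum_(z1 < r) \sum_(z2 < r) \sum_(z3 < r) \sum_(z4 < r)
     p z1 * p z2 * p z3 * p z4 *
     (edge_cdf F z1 z2 x12 * edge_cdf F z1 z3 x13 * edge_cdf F z3 z4 x34).

Definition cond_exp (R : realType) (r : nat)
  (F : 'I_r -> 'I_r -> probability R R) (phi : R -> R) (z1 z2 : 'I_r)
  : \bar R :=
  (\int[F z1 z2]_x (phi x)%:E)%E.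

From HB Require Import structures.
From mathcomp Require Import all_boot all_order all_algebra.
From mathcomp Require Import all_classical all_reals all_analysis.
From mathcomp Require Import ring.
Import Order.TTheory GRing.Theory Num.Theory.
Import numFieldNormedType.Exports.
Local Open Scope classical_set_scope.
Local Open Scope ring_scope.
Set Implicit Arguments. Unset Strict Implicit. Unset Printing Implicit Defensive.

(* The node distribution functions a_z = F_z are linearly independent, so they
   admit dual linear functionals L_z with L_z(a_w) = [z = w].  Applying L_z in
   one variable to the two-star identity
     sum_z p_z a_z(x) a_z(y) = sum_w p'_w b_w(x) b_w(y)
   puts each a_z in the span of the b_w and conversely, so r = r'.  The
   three-star identity yields the two-star one by letting one argument tend to
   +oo; applying L_z to it as well shows that each a_z coincides with a single
   b_w carrying the same weight, which gives the relabeling sigma.  Finally the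
   path cdf is a bilinear form in the independent a_z with coefficients
   p_z1 p_z2 F_{z1,z2}(y), so the edge laws, hence the conditional expectations,
   agree after relabeling. *)

Section LinearIndependence.
Variables (K : fieldType) (T : Type).

Definition lin_indep n (f : 'I_n -> T -> K) := forall c : 'I_n -> K,
  (forall x, \sum_(i < n) c i * f i x = 0) -> forall i, c i = 0.

Definition lin_functional (L : (T -> K) -> K) := forall k h1 h2,
  L (fun x => k * h1 x + h2 x) = k * L h1 + L h2.

Definition dual_family n (f : 'I_n -> T -> K) (L : 'I_n -> (T -> K) -> K) :=
  (forall i, lin_functional (L i)) /\ (forall i j, L i (f j) = (i == j)%:R).

Lemma sum_mulr_delta n (c : 'I_n -> K) j : \sum_(i < n) c i * (i == j)%:R = c j.
Proof.
rewrite (bigD1 j) //= eqxx mulr1 big1 ?addr0 // => i /negbTE ->.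
by rewrite mulr0.
Qed.

Lemma lin_functional0 L : lin_functional L -> L (fun=> 0) = 0.
Proof.
move=> L_lin; have /= := L_lin 1 (fun=> 0) (fun=> 0).
rewrite !mul1r (_ : (fun _ => 0 + 0) = fun=> 0); last first.
  by apply/funext => x; rewrite addr0.
by move/esym/eqP; rewrite -subr_eq0 addrK => /eqP.
Qed.

Lemma lin_functional_sum L n (c : 'I_n -> K) (h : 'I_n -> T -> K) :
  lin_functional L ->
  L (fun x => \sum_(i < n) c i * h i x) = \sum_(i < n) c i * L (h i).
Proof.
move=> L_lin; elim: n c h => [|n IH] c h.
  rewrite big_ord0 -[RHS](lin_functional0 L_lin); congr L.
  by apply/funext => x; rewrite big_ord0.
rewrite big_ord_recl -IH -L_lin; congr L.
by apply/funext => x; rewrite big_ord_recl.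
Qed.

Lemma lin_indep_coefE n (f : 'I_n -> T -> K) (c d : 'I_n -> K) : lin_indep f ->
  (forall x, \sum_i c i * f i x = \sum_i d i * f i x) -> c =1 d.
Proof.
move=> f_indep cd i; apply/eqP; rewrite -subr_eq0; apply/eqP.
apply: (f_indep (fun i => c i - d i)) => x.
by under eq_bigr do rewrite mulrBl; rewrite sumrB cd subrr.
Qed.

Lemma lin_indep_coef2E n (f : 'I_n -> T -> K) (C D : 'I_n -> 'I_n -> K) :
  lin_indep f ->
  (forall x y, \sum_i \sum_j C i j * f i x * f j y =
               \sum_i \sum_j D i j * f i x * f j y) ->
  forall i j, C i j = D i j.
Proof.
move=> f_indep CD i; apply: (lin_indep_coefE f_indep) => y; move: i.
apply: (lin_indep_coefE f_indep) => x.
transitivity (\sum_i \sum_j C i j * f i x * f j y); last first.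
  rewrite CD; apply: eq_bigr => i _; rewrite mulr_suml.
  by apply: eq_bigr => j _; rewrite mulrAC.
apply: eq_bigr => i _; rewrite mulr_suml.
by apply: eq_bigr => j _; rewrite mulrAC.
Qed.

Lemma lin_indep_inj n (f : 'I_n -> T -> K) : lin_indep f -> injective f.
Proof.
move=> f_indep i j fij; apply/eqP.
have /(_ i) : (fun k => (k == i)%:R) =1 (fun k => (k == j)%:R) :> ('I_n -> K).
  apply: (lin_indep_coefE f_indep) => x.
  under [LHS]eq_bigr do rewrite mulrC; under [RHS]eq_bigr do rewrite mulrC.
  by rewrite !sum_mulr_delta fij.
by rewrite eqxx; case: eqP => // _ /eqP; rewrite mulr0n oner_eq0.
Qed.

Lemma lin_indep_neq0 n (f : 'I_n -> T -> K) i :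
  lin_indep f -> exists x, f i x != 0.
Proof.
move=> f_indep; apply/not_existsP => f0.
suff : (i == i)%:R = 0 :> K by rewrite eqxx => /eqP; rewrite oner_eq0.
apply: (f_indep (fun k => (k == i)%:R)) => x.
under eq_bigr do rewrite mulrC; rewrite sum_mulr_delta.
by apply/eqP/negPn/negP; exact: f0.
Qed.

Lemma lin_indep_lift n (f : 'I_n.+1 -> T -> K) :
  lin_indep f -> lin_indep (fun i => f (lift ord0 i)).
Proof.
move=> f_indep c c0 i.
pose c' k := if unlift ord0 k is Some j then c j else 0.
suff : c' (lift ord0 i) = 0 by rewrite /c' liftK.
apply: f_indep => x.
rewrite big_ord_recl /c' unlift_none mul0r add0r -[RHS](c0 x).
by apply: eq_bigr => j _; rewrite liftK.
Qed.

Lemma lin_indep_ord0_notin_span n (f : 'I_n.+1 -> T -> K) (mu : 'I_n -> K) :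
  lin_indep f -> exists y, f ord0 y - \sum_i mu i * f (lift ord0 i) y != 0.
Proof.
move=> f_indep; apply/not_existsP => res0.
pose c k := if unlift ord0 k is Some i then - mu i else 1.
suff : c ord0 = 0 by rewrite /c unlift_none => /eqP; rewrite oner_eq0.
apply: f_indep => x; rewrite big_ord_recl /c unlift_none mul1r.
under eq_bigr do rewrite liftK mulNr.
by rewrite sumrN; apply/eqP/negPn/negP; exact: res0.
Qed.

Lemma dual_family_recl n (f : 'I_n.+1 -> T -> K) (L' : 'I_n -> (T -> K) -> K) :
  lin_indep f -> dual_family (fun i => f (lift ord0 i)) L' ->
  exists L, dual_family f L.
Proof.
move=> f_indep [L'_lin L'f].
pose mu i := L' i (f ord0).
have [y0 res_y0] := lin_indep_ord0_notin_span mu f_indep.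
(* Evaluation at [y0] minus its projection onto the tail family. *)
pose L0 h := (h y0 - \sum_i f (lift ord0 i) y0 * L' i h)
              / (f ord0 y0 - \sum_i mu i * f (lift ord0 i) y0).
have L0_lin : lin_functional L0.
  move=> k h1 h2; rewrite /L0; under eq_bigr do rewrite L'_lin mulrDr mulrCA.
  by rewrite big_split -mulr_sumr /=; ring.
have L0_lift i : L0 (f (lift ord0 i)) = 0.
  rewrite /L0; under eq_bigr do rewrite L'f.
  by rewrite sum_mulr_delta subrr mul0r.
have L0_ord0 : L0 (f ord0) = 1.
  rewrite /L0 (eq_bigr (fun i => mu i * f (lift ord0 i) y0)) ?divff // => i _.
  exact: mulrC.
exists (fun k => if unlift ord0 k is Some i then fun h => L' i h - mu i * L0 h
                 else L0); split.
  move=> k; case: unliftP => [i|] _ // c h1 h2.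
  by rewrite L'_lin L0_lin; ring.
move=> k l.
case: (unliftP ord0 k) => [i|] ->; case: (unliftP ord0 l) => [j|] ->.
- by rewrite (inj_eq lift_inj) L'f L0_lift mulr0 subr0.
- by rewrite L0_ord0 mulr1 subrr eq_sym (negbTE (neq_lift _ _)).
- by rewrite L0_lift (negbTE (neq_lift _ _)).
- by rewrite L0_ord0 eqxx.
Qed.

Lemma dual_family_exists n (f : 'I_n -> T -> K) :
  lin_indep f -> exists L, dual_family f L.
Proof.
elim: n f => [|n IH] f f_indep; first by exists (fun _ _ => 0); split; case.
have [L' L'dual] := IH _ (lin_indep_lift f_indep).
exact: dual_family_recl L'dual.
Qed.

Lemma dual_family_coord n m (a : 'I_n -> T -> K) L (b : 'I_m -> T -> K)
    (c : 'I_n -> K) (d : 'I_m -> K) :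
  dual_family a L -> (forall x, \sum_i c i * a i x = \sum_w d w * b w x) ->
  forall i, c i = \sum_w d w * L i (b w).
Proof.
move=> [L_lin La] cd i.
have := congr1 (L i) (funext cd); rewrite !lin_functional_sum //.
by under eq_bigr do rewrite La eq_sym; rewrite sum_mulr_delta.
Qed.

Lemma lin_indep_span_le n m (a : 'I_n -> T -> K) (b : 'I_m -> T -> K)
    (M : 'M[K]_(n, m)) (N : 'M[K]_(m, n)) : lin_indep a ->
  (forall i x, a i x = \sum_w M i w * b w x) ->
  (forall w x, b w x = \sum_i N w i * a i x) -> (n <= m)%N.
Proof.
move=> a_indep aM bN.
have MN : M *m N = 1%:M.
  apply/matrixP => i; apply: (lin_indep_coefE a_indep) => x.
  under [RHS]eq_bigr do rewrite mxE mulrC eq_sym; rewrite sum_mulr_delta aM.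
  under eq_bigr do rewrite mxE mulr_suml; rewrite exchange_big.
  apply: eq_bigr => w _; rewrite bN mulr_sumr.
  by apply: eq_bigr => k _; rewrite mulrA.
by rewrite -(mxrank1 K n) -MN (leq_trans (mxrankM_maxl M N)) ?rank_leq_col.
Qed.

End LinearIndependence.

Section FiniteMixtures.
Variables (K : fieldType) (T : Type).

Definition mixture2 n (p : 'I_n -> K) (a : 'I_n -> T -> K) x y :=
  \sum_(i < n) p i * a i x * a i y.

Definition mixture3 n (p : 'I_n -> K) (a : 'I_n -> T -> K) x y t :=
  \sum_(i < n) p i * a i x * a i y * a i t.

Variables (n m : nat) (p : 'I_n -> K) (q : 'I_m -> K).
Variables (a : 'I_n -> T -> K) (b : 'I_m -> T -> K).
Hypotheses (p_neq0 : forall i, p i != 0) (a_indep : lin_indep a).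
Hypothesis mix2 : forall x y, mixture2 p a x y = mixture2 q b x y.
Hypotheses (q_neq0 : forall w, q w != 0) (b_indep : lin_indep b).
Hypothesis mix3 : forall x y t, mixture3 p a x y t = mixture3 q b x y t.

Section DualCoordinates.
Variable L : 'I_n -> (T -> K) -> K.
Hypothesis La : dual_family a L.

Lemma mixture2_coord i x : p i * a i x = \sum_w q w * b w x * L i (b w).
Proof. exact: dual_family_coord La (mix2 x) i. Qed.

Lemma mixture3_coord i x y :
  p i * a i x * a i y = \sum_w q w * b w x * b w y * L i (b w).
Proof. exact: dual_family_coord La (mix3 x y) i. Qed.

(* Eliminating [p i * a i x] between the two coordinate identities gives
   [q w * L i (b w) * (a i t - b w t) = 0]. *)
Lemma dual_coord_neq0 i w : L i (b w) != 0 -> b w = a i.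
Proof.
move=> Lbw; apply/funext => t; apply/esym/(mulfI (mulf_neq0 (q_neq0 w) Lbw)).
apply: (lin_indep_coefE (c := fun w => q w * L i (b w) * a i t)
                        (d := fun w => q w * L i (b w) * b w t) b_indep) => x.
transitivity (a i t * (p i * a i x)).
  by rewrite mixture2_coord mulr_sumr; apply: eq_bigr => v _; ring.
by rewrite [LHS]mulrC mixture3_coord; apply: eq_bigr => v _; ring.
Qed.

Lemma exists_dual_coord_neq0 i : exists w, L i (b w) != 0.
Proof.
apply/not_existsP => L0; have [x aix] := lin_indep_neq0 i a_indep.
have := mixture2_coord i x; rewrite big1 => [/eqP|w _].
  by rewrite mulf_eq0 (negbTE (p_neq0 i)) (negbTE aix).
by have /negP/negbNE/eqP-> := L0 w; rewrite mulr0.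
Qed.

End DualCoordinates.

Lemma mixture2_span :
  exists M : 'M[K]_(n, m), forall i x, a i x = \sum_w M i w * b w x.
Proof.
have [L La] := dual_family_exists a_indep.
exists (\matrix_(i, w) ((p i)^-1 * (q w * L i (b w)))) => i x.
apply: (mulfI (p_neq0 i)); rewrite (mixture2_coord La) mulr_sumr.
by apply: eq_bigr => w _; rewrite mxE; field.
Qed.

Lemma mixture3_embed :
  exists s : 'I_n -> 'I_m, forall i, b (s i) = a i /\ q (s i) = p i.
Proof.
have [L La] := dual_family_exists a_indep.
have [s Ls] := choice (exists_dual_coord_neq0 La).
exists s => i; have bs := dual_coord_neq0 La (Ls i).
split=> //; have [x aix] := lin_indep_neq0 i a_indep.
apply: (mulIf aix); rewrite (mixture2_coord La) (bigD1 (s i)) //= big1 ?addr0.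
  by rewrite bs La.2 eqxx mulr1.
move=> w ws; have [->|Lw] := eqVneq (L i (b w)) 0; first by rewrite mulr0.
have := dual_coord_neq0 La Lw; rewrite -bs.
by move/(lin_indep_inj b_indep)/eqP; rewrite (negbTE ws).
Qed.

End FiniteMixtures.

Section MixtureIdentifiability.
Variables (K : fieldType) (T : Type) (n m : nat).
Variables (p : 'I_n -> K) (q : 'I_m -> K).
Variables (a : 'I_n -> T -> K) (b : 'I_m -> T -> K).
Hypotheses (p_neq0 : forall i, p i != 0) (q_neq0 : forall w, q w != 0).
Hypotheses (a_indep : lin_indep a) (b_indep : lin_indep b).
Hypothesis mix2 : forall x y, mixture2 p a x y = mixture2 q b x y.

Lemma mixture2_card_eq : n = m.
Proof.
have [M aM] := mixture2_span p_neq0 a_indep mix2.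
have [N bN] := mixture2_span q_neq0 b_indep (fun x y => esym (mix2 x y)).
by apply/eqP; rewrite eqn_leq (lin_indep_span_le a_indep aM bN)
                               (lin_indep_span_le b_indep bN aM).
Qed.

Hypothesis mix3 : forall x y t, mixture3 p a x y t = mixture3 q b x y t.

Lemma mixture3_relabel : exists s : 'I_n -> 'I_m,
  [/\ bijective s, forall i, b (s i) = a i & forall i, q (s i) = p i].
Proof.
have [s sE] := mixture3_embed p_neq0 a_indep mix2 q_neq0 b_indep mix3.
have [t tE] := mixture3_embed q_neq0 b_indep (fun x y => esym (mix2 x y))
                 p_neq0 a_indep (fun x y t => esym (mix3 x y t)).
have sK : cancel s t.
  by move=> i; apply: (lin_indep_inj a_indep); rewrite (tE _).1 (sE _).1.
have tK : cancel t s.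
  by move=> w; apply: (lin_indep_inj b_indep); rewrite (sE _).1 (tE _).1.
by exists s; split=> [|i|i]; [exists t | exact: (sE i).1 | exact: (sE i).2].
Qed.

End MixtureIdentifiability.

Section BlockModelDistributions.
Variable R : realType.

Let idR : R -> R := idfun.
#[local] HB.instance Definition _ :=
  @isMeasurableFun.Build _ _ _ _ idR (@measurable_id _ _ setT).

Lemma cvg_fine_cdfy1 (P : probability R R) :
  fine (P `]-oo, x]%classic) @[x --> +oo%R] --> (1 : R).
Proof. exact: fine_cvg (cvg_cdfy1 (idR : {RV P >-> R})). Qed.

Lemma probability_eq_cdf (P1 P2 : probability R R) :
  (forall x, fine (P1 `]-oo, x]%classic) = fine (P2 `]-oo, x]%classic)) ->
  forall A, measurable A -> P1 A = P2 A.
Proof.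
move=> P12 A mA.
have P12E x : P1 `]-oo, x]%classic = P2 `]-oo, x]%classic.
  by rewrite -[LHS]fineK ?fin_num_measure // -[RHS]fineK ?fin_num_measure // P12.
have finP (P : probability R R) B : measurable B -> (P B < +oo)%E.
  by move=> mB; rewrite (le_lt_trans (probability_le1 _ mB)) ?ltry.
apply: (measure_unique (@ocitv R) (fun k : nat => `](- k%:R), k%:R]%classic)) => //.
- exact: ocitvI.
- by move=> k; exact: is_ocitv.
- by rewrite bigcup_itvT.
- move=> _ [[x y] _ <-] /=.
  have [xy | yx] := leP x y; last first.
    by rewrite set_itv_ge ?measure0 // bnd_simp -leNgt ltW.
  have -> : `]x, y]%classic = `]-oo, y] `\` `]-oo, x].
    by rewrite -[RHS]setCK setCD setCitvl setUC -[LHS]setCK setCitv.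
  rewrite !measureD ?finP //= (setIidr (subset_itvl _)) ?bnd_simp //.
  by rewrite !P12E.
- by move=> k; exact: finP.
Qed.

Lemma mixture3_cvgy n (p : 'I_n -> R) (a : 'I_n -> R -> R) x y :
  (forall i, a i t @[t --> +oo%R] --> (1 : R)) ->
  mixture3 p a x y t @[t --> +oo%R] --> mixture2 p a x y.
Proof.
move=> a1; apply: cvg_big => [|i _]; first exact: add_continuous.
by rewrite -[X in _ --> X]mulr1; apply: cvgMl_tmp.
Qed.

Variables (r : nat) (p : 'I_r -> R) (F : 'I_r -> 'I_r -> probability R R).

Lemma node_cdf_cvgy1 z : \sum_(w < r) p w = 1 ->
  node_cdf p F z t @[t --> +oo%R] --> (1 : R).
Proof.
move=> p1; rewrite -p1; apply: cvg_big => [|w _]; first exact: add_continuous.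
by rewrite -[X in _ --> X]mul1r; apply: cvgMr_tmp; exact: cvg_fine_cdfy1.
Qed.

Lemma twostar_cdfE x y : twostar_cdf p F x y = mixture2 p (node_cdf p F) x y.
Proof.
apply: eq_bigr => i _; rewrite /node_cdf -mulrA mulr_suml mulr_sumr.
apply: eq_bigr => j _; rewrite !mulr_sumr; apply: eq_bigr => k _; ring.
Qed.

Lemma threestar_cdfE x y t :
  threestar_cdf p F x y t = mixture3 p (node_cdf p F) x y t.
Proof.
apply: eq_bigr => i _; rewrite /node_cdf -!mulrA mulr_suml mulr_sumr.
apply: eq_bigr => j _; rewrite mulr_suml !mulr_sumr; apply: eq_bigr => k _.
rewrite !mulr_sumr; apply: eq_bigr => l _; ring.
Qed.

Lemma path_cdfE x y t : path_cdf p F x y t =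
  \sum_i \sum_j p i * p j * edge_cdf F i j y
                * node_cdf p F i x * node_cdf p F j t.
Proof.
apply: eq_bigr => i _; rewrite exchange_big; apply: eq_bigr => j _.
rewrite /node_cdf -!mulrA mulr_suml !mulr_sumr; apply: eq_bigr => k _.
rewrite !mulr_sumr; apply: eq_bigr => l _; ring.
Qed.

Lemma threestar_cdf_cvgy x y : \sum_(z < r) p z = 1 ->
  threestar_cdf p F x y t @[t --> +oo%R] --> twostar_cdf p F x y.
Proof.
move=> p1; rewrite twostar_cdfE; under eq_cvg do rewrite threestar_cdfE.
by apply: mixture3_cvgy => i; exact: node_cdf_cvgy1.
Qed.

End BlockModelDistributions.

Lemma edge_cdf_relabel (R : realType) r r' (p : 'I_r -> R) (p' : 'I_r' -> R)
    (F : 'I_r -> 'I_r -> probability R R)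
    (F' : 'I_r' -> 'I_r' -> probability R R) (s : 'I_r -> 'I_r') :
  (forall z, p z != 0) -> lin_indep (node_cdf p F) -> bijective s ->
  (forall z, node_cdf p' F' (s z) = node_cdf p F z) ->
  (forall z, p' (s z) = p z) ->
  (forall x y t, path_cdf p F x y t = path_cdf p' F' x y t) ->
  forall z1 z2 y, edge_cdf F' (s z1) (s z2) y = edge_cdf F z1 z2 y.
Proof.
move=> p_neq0 a_indep s_bij node_s p_s path_eq z1 z2 y.
apply/esym/(mulfI (mulf_neq0 (p_neq0 z1) (p_neq0 z2))).
pose C i j := p i * p j * edge_cdf F i j y.
pose D i j := p i * p j * edge_cdf F' (s i) (s j) y.
apply: (lin_indep_coef2E (C := C) (D := D) a_indep) => x t.
rewrite -path_cdfE path_eq path_cdfE.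
rewrite (reindex s) /=; last exact: onW_bij.
apply: eq_bigr => i _; rewrite (reindex s) /=; last exact: onW_bij.
by apply: eq_bigr => j _; rewrite !node_s !p_s.
Qed.

Lemma cond_exp_eq_cdf (R : realType) r r' (F : 'I_r -> 'I_r -> probability R R)
    (F' : 'I_r' -> 'I_r' -> probability R R) phi z1 z2 w1 w2 :
  (forall x, edge_cdf F' w1 w2 x = edge_cdf F z1 z2 x) ->
  cond_exp F' phi w1 w2 = cond_exp F phi z1 z2.
Proof.
move=> F12; apply: (eq_measure_integral (F z1 z2)) => A mA _.
exact: probability_eq_cdf.
Qed.

Unset Implicit Arguments.
Theorem theorem1 (R : realType) (phi : R -> R)
  (r : nat) (p : 'I_r -> R) (F : 'I_r -> 'I_r -> probability R R)
  (r' : nat) (p' : 'I_r' -> R) (F' : 'I_r' -> 'I_r' -> probability R R) :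
  wsbm p F -> Fz_lin_indep p F ->
  wsbm p' F' -> Fz_lin_indep p' F' ->
  ((forall x2 x3, twostar_cdf p F x2 x3 = twostar_cdf p' F' x2 x3) ->
     r = r')
  /\
  (measurable_fun setT phi ->
   (forall z1 z2, (F z1 z2).-integrable setT (fun x => (phi x)%:E)) ->
   (forall z1 z2, (F' z1 z2).-integrable setT (fun x => (phi x)%:E)) ->
   (forall x2 x3 x4,
      threestar_cdf p F x2 x3 x4 = threestar_cdf p' F' x2 x3 x4) ->
   (forall x12 x13 x34,
      path_cdf p F x12 x13 x34 = path_cdf p' F' x12 x13 x34) ->
   exists sigma : 'I_r -> 'I_r',
     bijective sigma /\
     (forall z, p' (sigma z) = p z) /\
     (forall z1 z2, cond_exp F' phi (sigma z1) (sigma z2) = cond_exp F phi z1 z2)).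
Proof.
move=> [p_gt0 [p_sum1 _]] a_indep [q_gt0 [q_sum1 _]] b_indep.
have p_neq0 z : p z != 0 by exact: lt0r_neq0.
have q_neq0 w : p' w != 0 by exact: lt0r_neq0.
have mix2 : (forall x y, twostar_cdf p F x y = twostar_cdf p' F' x y) ->
    forall x y, mixture2 p (node_cdf p F) x y = mixture2 p' (node_cdf p' F') x y.
  by move=> two x y; rewrite -!twostar_cdfE.
split=> [two|_ _ _ three path].
  exact: mixture2_card_eq p_neq0 q_neq0 a_indep b_indep (mix2 two).
have two x y : twostar_cdf p F x y = twostar_cdf p' F' x y.
  have three_lim : threestar_cdf p F x y t @[t --> +oo%R] --> twostar_cdf p' F' x y.
    by under eq_cvg do rewrite three; exact: threestar_cdf_cvgy.
  exact: cvg_unique _ (threestar_cdf_cvgy p_sum1) three_lim.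
have mix3 x y t :
    mixture3 p (node_cdf p F) x y t = mixture3 p' (node_cdf p' F') x y t.
  by rewrite -!threestar_cdfE.
have [s [s_bij node_s p_s]] :=
  mixture3_relabel p_neq0 q_neq0 a_indep b_indep (mix2 two) mix3.
exists s; split=> //; split=> // z1 z2.
by apply: cond_exp_eq_cdf => x; exact: edge_cdf_relabel.
Qed.
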